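(* Let $\Gamma$ be a metrized graph and let $p,q,s\in\Gamma$ with $p\neq q$. Writing $p$ also for the point of $\Gamma_{pq}$ obtained by identifying $p$ and $q$, we have $$r_{\Gamma_{pq}}(p,s)=\frac{r(p,s)\,r(q,s)-j_s(p,q)^2}{r(p,q)}=j_s(p,q)+\frac{j_p(q,s)\,j_q(p,s)}{r(p,q)}=r(p,s)-\frac{j_p(q,s)^2}{r(p,q)}.$$
   Context: A metrized graph $\Gamma$ is a finite connected graph (multiple edges and self-loops allowed) in which each edge is identified with a closed line segment of positive length. $\Gamma$ is regarded as a resistive electric circuit in which each edge is a resistor whose resistance equals its length. $r(x,y)$ is the effective resistance between $x$ and $y$; $j_z(x,y)$ is the voltage at $x$ when a unit current enters at $y$ and exits at $z$, with reference voltage $0$ at $z$. $\Gamma_{pq}$ is the metrized graph obtained from $\Gamma$ by identifying $p$ and $q$, and $r_{\Gamma_{pq}}$ is its resistance function. *)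

From HB Require Import structures.
From mathcomp Require Import all_boot all_order all_algebra.
From Stdlib Require Import ClassicalEpsilon.
Set Implicit Arguments. Unset Strict Implicit. Unset Printing Implicit Defensive.
Import Order.TTheory GRing.Theory Num.Theory.
Local Open Scope ring_scope.

(* A metrized graph is given by a model: a finite vertex type V, a finite
   edge type E (multiple edges and self-loops allowed), endpoint maps
   src tgt : E -> V, and edge lengths len : E -> R (= resistances). *)

Section MetrizedGraph.
Variables (R : realFieldType) (V E : finType) (src tgt : E -> V) (len : E -> R).

Definition adj : rel V := fun u v =>
  [exists e : E, ((src e == u) && (tgt e == v)) || ((src e == v) && (tgt e == u))].

Definition connected_graph : Prop := forall u v : V, connect adj u v.

Definition positive_lengths : Prop := forall e : E, 0 < len e.

Definition current_out (f : V -> R) (v : V) : R :=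
  \sum_(e : E | src e == v) (f v - f (tgt e)) / len e +
  \sum_(e : E | tgt e == v) (f v - f (src e)) / len e.

(* f is the voltage when a unit current enters at y and exits at z,
   with reference voltage 0 at z (Kirchhoff's current law at every vertex) *)
Definition is_voltage (z y : V) (f : V -> R) : Prop :=
  f z = 0 /\ forall v : V, current_out f v = (v == y)%:R - (v == z)%:R.

Definition jfun (z x y : V) : R :=
  epsilon (inhabits (fun _ : V => 0 : R)) (is_voltage z y) x.

Definition resistance (x y : V) : R := jfun y x x.

End MetrizedGraph.

(* The graph Gamma_pq obtained by identifying p and q: vertex type
   {v : V | v != q}, every vertex q being sent to p. *)
Section Identify.
Variables (V : finType) (p q : V) (hpq : p != q).

Definition ident_vertex (v : V) : {v : V | v != q} :=
  insubd (exist (fun w : V => w != q) p hpq) v.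

End Identify.

(* Kirchhoff's laws determine a voltage up to an additive constant: a
   potential with zero net current everywhere has zero energy, hence is
   constant along edges and so on the connected graph.  The same fact makes
   the grounded Kirchhoff system injective, hence solvable.  Green's identity
   [sum_v g v * I_f v = sum_e (dg)(df)/len] yields reciprocity
   j_s(p,q) = j_s(q,p), the regrounding formulas
   r(p,q) = j_s(p,p) + j_s(q,q) - 2 j_s(p,q) and j_p(q,s) = j_s(p,p) - j_s(q,p),
   and r(p,q) > 0.
   On Gamma_pq, the voltage for a unit current from p to s lifts to
   alpha j_s(.,p) + beta j_s(.,q) with alpha = j_q(p,s)/r(p,q) and
   beta = j_p(q,s)/r(p,q): these weights sum to 1, so the currents push
   forward correctly, and they make the potential agree at p and q, so it
   descends to Gamma_pq.  Its value at p is
   (r(p,s) r(q,s) - j_s(p,q)^2)/r(p,q); the other two expressions are field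
   identities once j_p(q,s), j_q(p,s) and r(p,q) are regrounded at s. *)

From mathcomp Require Import all_boot all_order all_algebra.
From mathcomp Require Import ring.
From Stdlib Require Import ClassicalEpsilon.
Set Implicit Arguments. Unset Strict Implicit. Unset Printing Implicit Defensive.
Import Order.TTheory GRing.Theory Num.Theory.
Local Open Scope ring_scope.

Lemma sum_mul_indicator (R : pzSemiRingType) (T : finType) (g : T -> R) x :
  \sum_v g v * (v == x)%:R = g x.
Proof.
by rewrite (bigD1 x) //= eqxx mulr1 big1 ?addr0 // => v /negbTE->; rewrite mulr0.
Qed.

Lemma sum_mul_indicatorB (R : pzRingType) (T : finType) (g : T -> R) x y :
  \sum_v g v * ((v == x)%:R - (v == y)%:R) = g x - g y.
Proof.
by rewrite -!sum_mul_indicator -sumrB; apply: eq_bigr => v _; rewrite mulrBr.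
Qed.

Lemma sum_indicator_cond (R : pzSemiRingType) (T : finType) (P : pred T) x :
  \sum_(v | P v) ((v == x)%:R : R) = (P x)%:R.
Proof.
rewrite big_mkcond (bigD1 x) //= eqxx big1 ?addr0 => [|v /negbTE->]; by case: (P _).
Qed.

Lemma eq_at_of_eq_sum (R : zmodType) (T : finType) (a b : T -> R) z :
  \sum_v a v = \sum_v b v -> (forall v, v != z -> a v = b v) -> a z = b z.
Proof.
rewrite (bigD1 z) // [in RHS](bigD1 z) //= => sum_ab ab.
by move: sum_ab; rewrite [X in _ + X](eq_bigr b) // => /addIr.
Qed.

Lemma linear_system_surj (R : fieldType) (V : finType) (M : V -> V -> R) :
    (forall f : V -> R, (forall v, \sum_w M v w * f w = 0) -> forall w, f w = 0) ->
  forall b : V -> R, exists f : V -> R, forall v, \sum_w M v w * f w = b v.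
Proof.
move=> M_inj b.
pose A : 'M[R]_#|V| := \matrix_(i, k) M (enum_val k) (enum_val i).
pose fun_of (x : 'rV[R]_#|V|) w := x 0 (enum_rank w).
have mulA x v : (x *m A) 0 (enum_rank v) = \sum_w M v w * fun_of x w.
  rewrite mxE (reindex (@enum_rank V)) /=; last exact: onW_bij (enum_rank_bij V).
  by apply: eq_bigr => w _; rewrite mxE !enum_rankK mulrC.
have A_unit : A \in unitmx.
  rewrite -row_free_unit; apply: inj_row_free => x xA0; apply/rowP => i.
  rewrite mxE -(enum_valK i); apply: (M_inj (fun_of x)) => v.
  by rewrite -mulA xA0 mxE.
exists (fun_of (\row_i b (enum_val i) *m invmx A)) => v.
by rewrite -mulA mulmxKV // mxE enum_rankK.
Qed.

Section Network.
Variables (R : realFieldType) (V E : finType) (src tgt : E -> V) (len : E -> R).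

Local Notation current := (current_out src tgt len).
Local Notation j := (jfun src tgt len).

Lemma current_outE f v : current f v =
  \sum_e ((src e == v)%:R - (tgt e == v)%:R) * ((f (src e) - f (tgt e)) / len e).
Proof.
rewrite /current_out (big_mkcond (fun e => src e == v)).
rewrite (big_mkcond (fun e => tgt e == v)) -big_split; apply: eq_bigr => e _ /=.
by case: eqP => [->|_]; case: eqP => [->|_]; rewrite ?eqxx /=; ring.
Qed.

Lemma eq_current_out f g v : f =1 g -> current f v = current g v.
Proof. by move=> fg; rewrite !current_outE; apply: eq_bigr => e _; rewrite !fg. Qed.

Lemma current_out_cst c v : current (fun _ => c) v = 0.
Proof. by rewrite current_outE big1 // => e _; rewrite subrr mul0r mulr0. Qed.

Lemma current_outD f g v :
  current (fun x => f x + g x) v = current f v + current g v.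
Proof. by rewrite !current_outE -big_split; apply: eq_bigr => e _ /=; ring. Qed.

Lemma current_outB f g v :
  current (fun x => f x - g x) v = current f v - current g v.
Proof. by rewrite !current_outE -sumrB; apply: eq_bigr => e _ /=; ring. Qed.

Lemma current_outZ a f v : current (fun x => a * f x) v = a * current f v.
Proof. by rewrite !current_outE mulr_sumr; apply: eq_bigr => e _ /=; ring. Qed.

Lemma current_out_kernel f v :
  current f v = \sum_w current (fun u => (u == w)%:R) v * f w.
Proof.
under [RHS]eq_bigr do rewrite current_outE mulr_suml.
rewrite exchange_big current_outE; apply: eq_bigr => e _ /=.
rewrite -(sum_mul_indicatorB f) mulr_suml mulr_sumr; apply: eq_bigr => w _.
by rewrite [src e == w]eq_sym [tgt e == w]eq_sym; ring.
Qed.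

Lemma sum_mul_current_out f g : \sum_v g v * current f v =
  \sum_e (g (src e) - g (tgt e)) * (f (src e) - f (tgt e)) / len e.
Proof.
under eq_bigr do rewrite current_outE mulr_sumr.
rewrite exchange_big; apply: eq_bigr => e _ /=.
under eq_bigr do rewrite mulrA [src e == _]eq_sym [tgt e == _]eq_sym.
by rewrite -mulr_suml sum_mul_indicatorB mulrA.
Qed.

Lemma sum_mul_current_outC f g :
  \sum_v g v * current f v = \sum_v f v * current g v.
Proof. by rewrite !sum_mul_current_out; apply: eq_bigr => e _; ring. Qed.

Lemma sum_current_out f : \sum_v current f v = 0.
Proof.
have := sum_mul_current_out f (fun _ => 1); under eq_bigr do rewrite mul1r.
by move=> ->; rewrite big1 // => e _; rewrite subrr !mul0r.
Qed.

Definition energy (f : V -> R) : R := \sum_e (f (src e) - f (tgt e)) ^+ 2 / len e.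

Lemma sum_mul_current_out_energy f : \sum_v f v * current f v = energy f.
Proof. by rewrite sum_mul_current_out; apply: eq_bigr => e _; rewrite expr2. Qed.

Hypothesis len_gt0 : positive_lengths len.

Lemma energy_ge0 f : 0 <= energy f.
Proof. by apply: sumr_ge0 => e _; rewrite divr_ge0 ?sqr_ge0 ?ltW ?len_gt0. Qed.

Lemma energy_eq0 f : energy f = 0 -> forall e, f (src e) = f (tgt e).
Proof.
move=> energy0 e; apply/eqP; rewrite -subr_eq0 -sqrf_eq0.
have term_ge0 i : true -> 0 <= (f (src i) - f (tgt i)) ^+ 2 / len i.
  by rewrite divr_ge0 ?sqr_ge0 ?ltW ?len_gt0.
move/eqP: (@psumr_eq0P _ _ _ _ term_ge0 energy0 e isT).
by rewrite mulf_eq0 invr_eq0 (gt_eqF (len_gt0 e)) orbF.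
Qed.

Hypothesis connected : connected_graph src tgt.

Lemma const_of_edge_eq (T : eqType) (f : V -> T) :
  (forall e, f (src e) = f (tgt e)) -> forall u v, f u = f v.
Proof.
move=> f_edge u v; have closed_level : closed (adj src tgt) [pred x | f x == f u].
  by move=> x y /existsP[e /orP[]/andP[/eqP<- /eqP<-]]; rewrite !inE f_edge.
by have := closed_connect closed_level (connected u v); rewrite !inE eqxx => /esym/eqP.
Qed.

Lemma const_of_current_out0 f : (forall v, current f v = 0) -> forall u v, f u = f v.
Proof.
move=> f0; apply/const_of_edge_eq/energy_eq0.
by rewrite -sum_mul_current_out_energy big1 // => v _; rewrite f0 mulr0.
Qed.

Lemma voltage_exists z y : exists f, is_voltage src tgt len z y f.
Proof.
(* Kirchhoff's law at [z] follows from the others (the total current is 0),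
   so its row is replaced by the grounding condition [f z = 0]. *)
pose M v w := if v == z then (w == z)%:R else current (fun u => (u == w)%:R) v.
have ME f v : \sum_w M v w * f w = if v == z then f z else current f v.
  rewrite /M; case: (v == z); last by rewrite -current_out_kernel.
  by under eq_bigr do rewrite mulrC; rewrite sum_mul_indicator.
have M_inj f0 : (forall v, \sum_w M v w * f0 w = 0) -> forall w, f0 w = 0.
  move=> Mf0 w.
  have f0z : f0 z = 0 by have := Mf0 z; rewrite ME eqxx.
  have f0_off v : v != z -> current f0 v = 0.
    by move=> vz; have := Mf0 v; rewrite ME (negbTE vz).
  have f0_harmonic v : current f0 v = 0.
    have [->|/f0_off //] := eqVneq v z.
    apply: (eq_at_of_eq_sum (b := fun _ => 0)) f0_off.
    by rewrite sum_current_out big1.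
  by rewrite (const_of_current_out0 f0_harmonic w z).
have [f Mf] := linear_system_surj M_inj
  (fun v => if v == z then 0 else (v == y)%:R - (v == z)%:R).
have f_off v : v != z -> current f v = (v == y)%:R - (v == z)%:R.
  by move=> vz; have := Mf v; rewrite ME (negbTE vz).
have f_z : current f z = (z == y)%:R - (z == z)%:R.
  apply: (eq_at_of_eq_sum (b := fun v => (v == y)%:R - (v == z)%:R)) f_off.
  rewrite sum_current_out; have := sum_mul_indicatorB (fun _ => 1 : R) y z.
  by under eq_bigr do rewrite mul1r; rewrite subrr.
exists f; split => [|v]; first by have := Mf z; rewrite ME eqxx.
have [->|vz] := eqVneq v z; first by rewrite f_z eqxx.
by rewrite f_off // (negbTE vz).
Qed.

Lemma jfunP z y : is_voltage src tgt len z y (fun x => j z x y).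
Proof. exact: epsilon_spec (voltage_exists z y). Qed.

Lemma jfun_ground z y : j z z y = 0.
Proof. by case: (jfunP z y). Qed.

Lemma current_out_jfun z y v :
  current (fun x => j z x y) v = (v == y)%:R - (v == z)%:R.
Proof. by case: (jfunP z y). Qed.

Lemma jfun_unique z y f :
    (forall v, current f v = (v == y)%:R - (v == z)%:R) ->
  forall x, j z x y = f x - f z.
Proof.
move=> f_current x.
have diff_harmonic v : current (fun u => j z u y - f u) v = 0.
  by rewrite current_outB current_out_jfun f_current subrr.
have := const_of_current_out0 diff_harmonic x z; rewrite jfun_ground => diff_xz.
by rewrite -[j z x y](subrK (f x)) diff_xz; ring.
Qed.

Lemma jfun_source_ground z x : j z x z = 0.
Proof.
rewrite (@jfun_unique z z (fun _ => 0)) ?subrr // => v.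
by rewrite current_out_cst subrr.
Qed.

Lemma jfunC z x y : j z x y = j z y x.
Proof.
have pairing u w : \sum_v j z v u * current (fun x => j z x w) v = j z w u.
  under eq_bigr do rewrite current_out_jfun.
  by rewrite sum_mul_indicatorB jfun_ground subr0.
by rewrite -(pairing y x) sum_mul_current_outC pairing.
Qed.

Lemma jfun_reground z y w x :
  j y w x = j z w x - j z w y - (j z y x - j z y y).
Proof.
rewrite (@jfun_unique y x (fun u => j z u x - j z u y)) // => v.
by rewrite current_outB !current_out_jfun; ring.
Qed.

Lemma jfun_swap_ground z x y : j y x z = j z y y - j z x y.
Proof. by rewrite (jfun_reground z) !jfun_source_ground; ring. Qed.

Lemma resistance_jfun z x y :
  resistance src tgt len x y = j z x x + j z y y - 2 * j z x y.
Proof. by rewrite /resistance (jfun_reground z) (jfunC z y x); ring. Qed.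

Lemma resistance_gt0 x y : x != y -> 0 < resistance src tgt len x y.
Proof.
move=> xy; have r_energy : resistance src tgt len x y = energy (fun u => j y u x).
  rewrite -sum_mul_current_out_energy; under eq_bigr do rewrite current_out_jfun.
  by rewrite sum_mul_indicatorB jfun_ground subr0.
rewrite lt_def r_energy energy_ge0 andbT; apply/eqP.
move=> /energy_eq0/const_of_edge_eq j_const; have := current_out_jfun y x x.
rewrite (@eq_current_out _ (fun _ => j y x x)) => [|u]; last exact: j_const.
by rewrite current_out_cst eqxx (negbTE xy) subr0 => /eqP; rewrite eq_sym oner_eq0.
Qed.

End Network.

Section Quotient.
Variables (R : realFieldType) (V V' E : finType) (src tgt : E -> V) (len : E -> R).
Variables (phi : V -> V') (psi : V' -> V).
Hypothesis psiK : cancel psi phi.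

Local Notation src' := (fun e => phi (src e)).
Local Notation tgt' := (fun e => phi (tgt e)).

Lemma current_out_comp g v' : current_out src' tgt' len g v' =
  \sum_(v | phi v == v') current_out src tgt len (fun u => g (phi u)) v.
Proof.
rewrite current_outE; under [RHS]eq_bigr do rewrite current_outE.
rewrite exchange_big; apply: eq_bigr => e _ /=.
rewrite -mulr_suml; under eq_bigr do rewrite [src e == _]eq_sym [tgt e == _]eq_sym.
by rewrite sumrB !sum_indicator_cond.
Qed.

Lemma connect_comp x y :
  connect (adj src tgt) x y -> connect (adj src' tgt') (phi x) (phi y).
Proof.
have adj_comp u w : adj src tgt u w -> adj src' tgt' (phi u) (phi w).
  case/existsP=> e /orP[]/andP[/eqP<- /eqP<-];
  by apply/existsP; exists e; rewrite !eqxx ?orbT.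
case/connectP=> s; elim: s x => [x _ ->|w s IHs x /= /andP[/adj_comp xw ws]] //.
by move/(IHs w ws); apply: connect_trans; apply: connect1.
Qed.

Lemma connected_graph_comp :
  connected_graph src tgt -> connected_graph src' tgt'.
Proof. by move=> connected u v; rewrite -(psiK u) -(psiK v) connect_comp. Qed.

Hypotheses (len_gt0 : positive_lengths len) (connected : connected_graph src tgt).

Lemma jfun_comp (F : V -> R) (z y : V') :
    (forall v, F (psi (phi v)) = F v) ->
    (forall v', \sum_(v | phi v == v') current_out src tgt len F v =
                (v' == y)%:R - (v' == z)%:R) ->
  forall x, jfun src' tgt' len z x y = F (psi x) - F (psi z).
Proof.
move=> F_fibre F_current.
apply: (jfun_unique len_gt0 (connected_graph_comp connected)) => v'.
rewrite current_out_comp -F_current; apply: eq_bigr => v _.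
exact: eq_current_out F_fibre.
Qed.

End Quotient.

Section IdentifyPoints.
Variables (V : finType) (p q : V) (hpq : p != q).

Local Notation ident := (ident_vertex hpq).

Lemma ident_vertexK : cancel val ident.
Proof. exact: valKd. Qed.

Lemma ident_vertex_q : ident q = ident p.
Proof. by apply: val_inj; rewrite !val_insubd eqxx hpq. Qed.

Lemma ident_vertex_fibre (T : Type) (F : V -> T) :
  F p = F q -> forall v, F (val (ident v)) = F v.
Proof. by move=> Fpq v; rewrite val_insubd; case: eqP => // ->. Qed.

Variables (R : realFieldType) (E : finType) (src tgt : E -> V) (len : E -> R).
Hypotheses (len_gt0 : positive_lengths len) (connected : connected_graph src tgt).

Local Notation j := (jfun src tgt len).
Local Notation r := (resistance src tgt len).

Lemma resistance_ident s :
  resistance (fun e => ident (src e)) (fun e => ident (tgt e)) len (ident p) (ident s) =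
  ((j s q q - j s p q) * j s p p + (j s p p - j s p q) * j s p q) / r p q.
Proof.
have r_neq0 : r p q != 0 by rewrite gt_eqF ?resistance_gt0.
pose alpha := (j s q q - j s p q) / r p q; pose beta := (j s p p - j s p q) / r p q.
have alpha_beta : alpha + beta = 1.
  apply: (mulIf r_neq0); rewrite mulrDl !divfK // mul1r.
  by rewrite (resistance_jfun len_gt0 connected s); ring.
pose F u := alpha * j s u p + beta * j s u q.
have Fpq : F p = F q by rewrite /F (jfunC len_gt0 connected s q p) /alpha /beta; field.
have F_current v' : \sum_(v | ident v == v') current_out src tgt len F v =
    (v' == ident p)%:R - (v' == ident s)%:R.
  under eq_bigr do rewrite current_outD !current_outZ !current_out_jfun //.
  rewrite big_split /= -!mulr_sumr !sumrB !sum_indicator_cond ident_vertex_q.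
  by rewrite -mulrDl alpha_beta mul1r ![_ == v']eq_sym.
rewrite [LHS]/resistance.
rewrite (jfun_comp ident_vertexK len_gt0 connected (ident_vertex_fibre Fpq)) //.
by rewrite !ident_vertex_fibre // /F !(jfun_ground len_gt0 connected) /alpha /beta; field.
Qed.

End IdentifyPoints.

Theorem theorem2p4 (R : realFieldType) (V E : finType)
  (src tgt : E -> V) (len : E -> R) (p q s : V) (hpq : p != q) :
  connected_graph src tgt -> positive_lengths len ->
  let r := resistance src tgt len in
  let j := jfun src tgt len in
  let rpq := resistance (fun e => ident_vertex hpq (src e))
                        (fun e => ident_vertex hpq (tgt e)) len in
  let p' := ident_vertex hpq p in
  let s' := ident_vertex hpq s in
  [/\ rpq p' s' = (r p s * r q s - j s p q ^+ 2) / r p q,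
      rpq p' s' = j s p q + j p q s * j q p s / r p q
    & rpq p' s' = r p s - j p q s ^+ 2 / r p q].
Proof.
move=> connected len_gt0 r j rpq p' s'.
rewrite /rpq /p' /s' resistance_ident // /r /j.
have r_neq0 := lt0r_neq0 (resistance_gt0 len_gt0 connected hpq).
rewrite (resistance_jfun len_gt0 connected s) in r_neq0 *.
rewrite !(jfun_swap_ground len_gt0 connected s) /resistance.
by rewrite (jfunC len_gt0 connected s q p); split; field.
Qed.
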